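(* Let $m'\ge 2$ be an integer and $p\in(0,1/2)$ a constant. There exists an integer $M_{p,m'}$, depending only on $p$ and $m'$, such that for every integer $n'>M_{p,m'}$, $$\sum_{\substack{\ell\ge\mu\ge m'\\ \ell+\mu\le n'}}\binom{n'}{\ell+\mu}\binom{\ell+\mu}{\ell}\left(\frac{p}{1-p}\right)^{\ell\mu}\le 2\binom{n'}{m'}\left(1+\left(\frac{p}{1-p}\right)^{m'}\right)^{n'},$$ where the sum is over integers $\ell,\mu$. Moreover, if $p<0.01$, this inequality holds for all integers $m'\ge 2$ and $n'\ge 2m'$. *)

From HB Require Import structures.
From mathcomp Require Import all_boot all_order all_algebra.
From mathcomp Require Import reals.
Set Implicit Arguments. Unset Strict Implicit. Unset Printing Implicit Defensive.
Import Order.TTheory GRing.Theory Num.Theory.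
Local Open Scope ring_scope.

(* Both l and mu are necessarily <= n, so ranging over 'I_(n+1) is exhaustive. *)
Definition lhs_sum (R : realType) (p : R) (m n : nat) : R :=
  \sum_(l < n.+1) \sum_(mu < n.+1 | ((m <= mu)%N && (mu <= l)%N && (l + mu <= n)%N))
     ('C(n, l + mu) * 'C(l + mu, l))%:R * (p / (1 - p)) ^+ (l * mu).

Definition rhs_bound (R : realType) (p : R) (m n : nat) : R :=
  2 * ('C(n, m))%:R * (1 + (p / (1 - p)) ^+ m) ^+ n.

From HB Require Import structures.
From mathcomp Require Import all_boot all_order all_algebra.
From mathcomp Require Import reals.
From mathcomp Require Import zify ring lra.
Import Order.TTheory GRing.Theory Num.Theory.
Set Implicit Arguments. Unset Strict Implicit. Unset Printing Implicit Defensive.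

(* Write q = p / (1 - p), j = mu - m and t = l - m. Since
   l * mu = m * (l + j) + t * j  and
   C(n, l + mu) C(l + mu, l) C(mu, m) = C(n, m) C(n - m, l + j) C(l + j, j),
   the (l, mu) term is at most C(n, m) C(n - m, l + j) (q^m)^(l + j) 2^-j as soon
   as 2 (m + 2t) q^t <= m + 1.  Summing these majorants by the binomial theorem
   in l and a geometric series in j gives 2 C(n, m) (1 + q^m)^(n - m).
   For p < 1/100 we have q <= 1/8 and the condition holds whenever mu > m.
   For p < 1/2 it holds once t is large; the finitely many remaining rows
   contribute polynomially in n, which the spare factor (1 + q^m)^m of the
   right-hand side eventually absorbs. *)

Lemma ffact_leq_expn n k : n ^_ k <= n ^ k.
Proof.
elim: k => [|k IHk] //; rewrite ffactnSr expnSr.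
by rewrite leq_mul ?leq_subr.
Qed.

Lemma expn_leq_ffact m j : m.+1 ^ j <= (m + j) ^_ j.
Proof.
elim: j => [|j IHj] //; rewrite addnS ffactSS expnS.
by apply: leq_mul; lia.
Qed.

Lemma bin_leq_expn n k : 'C(n, k) <= n ^ k.
Proof.
apply: leq_trans (ffact_leq_expn n k); rewrite -bin_ffact leq_pmulr //.
exact: fact_gt0.
Qed.

Lemma bin_leq_exp2 n k : 'C(n, k) <= 2 ^ n.
Proof.
have [lt_nk|le_kn] := ltnP n k; first by rewrite bin_small.
rewrite -[2]/(1 + 1) expnDn (bigD1 (Ordinal (le_kn : k < n.+1))) //=.
by rewrite !exp1n !muln1 leq_addr.
Qed.

Lemma mul_bin_bin n k i : i <= k <= n ->
  'C(n, k) * 'C(k, i) = 'C(n, i) * 'C(n - i, k - i).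
Proof.
case/andP=> le_ik le_kn.
have /eqP : 'C(n, k) * 'C(k, i) * (i`! * (k - i)`! * (n - k)`!)
          = 'C(n, i) * 'C(n - i, k - i) * (i`! * (k - i)`! * (n - k)`!).
  have n_i_k : n - i - (k - i) = n - k by lia.
  transitivity n`!.
    by rewrite -(bin_fact le_kn) -(bin_fact le_ik); ring.
  rewrite -(bin_fact (leq_trans le_ik le_kn)).
  rewrite -(@bin_fact (n - i) (k - i)) ?n_i_k; last lia.
  ring.
by rewrite eqn_pmul2r ?muln_gt0 ?fact_gt0 // => /eqP.
Qed.

Lemma mul_bin_bin_bin n m l mu : m <= mu -> l + mu <= n ->
  'C(n, l + mu) * 'C(l + mu, l) * 'C(mu, m)
    = 'C(n, m) * 'C(n - m, l + (mu - m)) * 'C(l + (mu - m), mu - m).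
Proof.
move=> le_m_mu le_lmu_n; set j := mu - m; set k := l + j.
have sub_k : k - j = l by rewrite /k addnK.
have sub_nm : n - m - j = n - mu by rewrite /j; lia.
rewrite -[in LHS](bin_sub (leq_addr mu l)) addKn mul_bin_bin ?leq_addl //.
rewrite addnK -mulnA [_ * 'C(mu, m)]mulnC mulnA mul_bin_bin ?le_m_mu; last lia.
rewrite -/j -[RHS]mulnA mul_bin_bin ?sub_k ?sub_nm; last by rewrite /k /j; lia.
by rewrite mulnA [_ * 'C(n - mu, l)]mulnC.
Qed.

Local Open Scope ring_scope.

Lemma bernoulli_ler (R : realDomainType) (a : R) n :
  0 <= a -> 1 + n%:R * a <= (1 + a) ^+ n.
Proof.
move=> a_ge0; elim: n => [|n IHn]; first by rewrite mul0r addr0.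
have pow_ge1 : 1 <= (1 + a) ^+ n by rewrite exprn_ege1 // lerDl.
rewrite exprSr -natr1; nra.
Qed.

Lemma ler_sum_subpred (R : numDomainType) (I : Type) (r : seq I)
    (P Q : pred I) (F : I -> R) :
  (forall i, 0 <= F i) -> (forall i, P i -> Q i) ->
  \sum_(i <- r | P i) F i <= \sum_(i <- r | Q i) F i.
Proof.
move=> F_ge0 PQ; rewrite [leLHS]big_mkcond [leRHS]big_mkcond.
by apply: ler_sum => i _; case: ifP => [/PQ->|_] //; case: ifP.
Qed.

Lemma sum_bin_shift_le (R : numDomainType) (a : R) N A j : 0 <= a ->
  \sum_(i < A) 'C(N, i + j)%:R * a ^+ (i + j) <= (1 + a) ^+ N.
Proof.
move=> a_ge0; pose g k := 'C(N, k)%:R * a ^+ k.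
have g_ge0 k : 0 <= g k by rewrite mulr_ge0 ?exprn_ge0.
pose K := (A + j + N.+1)%N.
have sum_g : \sum_(0 <= k < K) g k = (1 + a) ^+ N.
  have tail0 : \sum_(N.+1 <= k < K) g k = 0.
    rewrite big_nat_cond big1 // => k /andP[/andP[ltNk _] _].
    by rewrite /g bin_small ?mul0r.
  rewrite (big_cat_nat (n := N.+1)) //= ?tail0 ?addr0; last lia.
  by rewrite big_mkord addrC exprD1n; apply: eq_bigr => k _; rewrite /g mulr_natl.
have -> : \sum_(i < A) g (i + j)%N = \sum_(0 + j <= k < A + j) g k.
  by rewrite big_addn addnK big_mkord.
rewrite -sum_g add0n (@big_nat_widenl _ _ _ _ 0) // (@big_nat_widen _ _ _ 0 _ K); last lia.
exact: ler_sum_subpred.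
Qed.

Lemma sum_halfpow (R : realFieldType) n :
  \sum_(i < n) (2^-1 : R) ^+ i = 2 - 2 * 2^-1 ^+ n.
Proof.
elim: n => [|n IHn]; first by rewrite big_ord0 expr0 mulr1 subrr.
by rewrite big_ord_recr /= IHn exprS mulrA divff ?pnatr_eq0 // mul1r; lra.
Qed.

Lemma sum_halfpow_le2 (R : realFieldType) m n :
  \sum_(m <= i < n) (2^-1 : R) ^+ (i - m) <= 2.
Proof.
rewrite -{1}[m]add0n big_addn big_mkord.
under eq_bigr do rewrite addnK.
by rewrite sum_halfpow gerBl mulr_ge0 ?exprn_ge0 ?invr_ge0.
Qed.

Lemma bin_mul_pow_le (R : realFieldType) (x : R) k m j :
  0 <= x -> 2 * k%:R * x <= m.+1%:R ->
  'C(k, j)%:R * x ^+ j <= 'C(m + j, j)%:R * 2^-1 ^+ j.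
Proof.
move=> x_ge0 kx_le.
have scale c (y : R) :
    c%:R * y ^+ j * (j`! * 2 ^ j)%:R = (c * j`!)%:R * (y * 2) ^+ j.
  by rewrite natrM natrX mulrACA -exprMn -natrM.
rewrite -(@ler_pM2r _ (j`! * 2 ^ j)%:R) ?ltr0n ?muln_gt0 ?fact_gt0 ?expn_gt0 //.
rewrite !scale mulVf ?pnatr_eq0 // expr1n mulr1 !bin_ffact.
apply: le_trans (_ : (k ^ j)%:R * (x * 2) ^+ j <= _).
  by rewrite ler_wpM2r ?exprn_ge0 ?mulr_ge0 // ler_nat ffact_leq_expn.
apply: le_trans (_ : (m.+1 ^ j)%:R <= _); last by rewrite ler_nat expn_leq_ffact.
rewrite !natrX -exprMn lerXn2r ?nnegrE ?mulr_ge0 //.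
by rewrite (_ : k%:R * (x * 2) = 2 * k%:R * x) //; ring.
Qed.

Lemma exp_dominates_poly (R : archiRealFieldType) (a c : R) E :
  0 < a -> 0 <= c ->
  exists M : nat, forall n : nat, (M < n)%N -> c * (n.+1 ^ E)%:R <= (1 + a) ^+ n.
Proof.
(* With d = E + 1 and K = n %/ d, Bernoulli gives (1 + a)^n >= (K a)^d, while
   (n + 1)^E <= (2 d K)^E has one power of K less. *)
move=> a_gt0 c_ge0; have a_ge0 := ltW a_gt0; pose d := E.+1.
pose X := c * ((2 * d) ^ E)%:R / a ^+ d.
have X_ge0 : 0 <= X by rewrite /X divr_ge0 ?mulr_ge0 ?exprn_ge0.
exists (d * (Num.bound X).+1)%N; move=> n lt_Mn; pose K := (n %/ d)%N.
have lt_bound_K : (Num.bound X < K)%N by rewrite leq_divRL // mulnC ltnW.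
have lt_XK : X < K%:R.
  by apply: lt_le_trans (archi_boundP X_ge0) _; rewrite ler_nat ltnW.
have n1_le : (n.+1 <= 2 * d * K)%N.
  by have := ltn_ceil n (ltn0Sn E); rewrite -/d -/K; nia.
have K_a_le : (K%:R * a) ^+ d <= (1 + a) ^+ n.
  apply: le_trans (_ : ((1 + a) ^+ K) ^+ d <= _).
    apply: lerXn2r; rewrite ?nnegrE ?mulr_ge0 ?exprn_ge0 ?addr_ge0 //.
    by apply: le_trans _ (bernoulli_ler K a_ge0); rewrite lerDr.
  by rewrite -exprM ler_weXn2l ?lerDl // leq_divM.
apply: le_trans K_a_le.
apply: le_trans (_ : c * ((2 * d) ^ E)%:R * K%:R ^+ E <= _).
  rewrite -mulrA ler_wpM2l // !natrX -exprMn -natrM.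
  by rewrite lerXn2r ?nnegrE // ler_nat.
have -> : c * ((2 * d) ^ E)%:R = X * a ^+ d by rewrite mulfVK // expf_neq0 ?gt_eqF.
rewrite exprMn [K%:R ^+ d]exprS [leRHS]mulrAC.
by do 2![apply: ler_wpM2r; first exact: exprn_ge0]; exact: ltW.
Qed.

Lemma exp_dominates_poly_shift (R : archiRealFieldType) (a c : R) E m :
  0 < a -> 0 <= c ->
  exists M : nat, forall n : nat, (M < n)%N ->
    c * (n.+1 ^ E)%:R <= a * (1 + a) ^+ (n - m).
Proof.
move=> a_gt0 c_ge0; pose W := (1 + a) ^+ m / a.
have W_gt0 : 0 < W by rewrite divr_gt0 // exprn_gt0 // addr_gt0.
have [M poly_le] := exp_dominates_poly E a_gt0 (mulr_ge0 c_ge0 (ltW W_gt0)).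
exists (maxn M m) => n; rewrite gtn_max => /andP[lt_Mn lt_mn].
rewrite -(ler_pM2r W_gt0) mulrAC.
have -> : a * (1 + a) ^+ (n - m) * W = (1 + a) ^+ (n - m) * (1 + a) ^+ m * (a / a).
  by rewrite /W; ring.
by rewrite divff ?gt_eqF // mulr1 -exprD subnK ?poly_le // ltnW.
Qed.

Lemma exists_decay_le (R : archiRealFieldType) (q : R) m :
  0 < q < 1 ->
  exists T : nat, forall t : nat, (T <= t)%N -> 2 * (m + 2 * t)%:R * q ^+ t <= m.+1%:R.
Proof.
case/andP=> q_gt0 q_lt1.
have b_gt0 : 0 < q^-1 - 1 by rewrite subr_gt0 invf_gt1.
have [M poly_le] := exp_dominates_poly 1 b_gt0 (ler0n _ (2 * (m + 2))).
exists M.+1 => t le_Mt; have := poly_le t le_Mt; rewrite expn1 addrC subrK => decay.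
have qt_gt0 : 0 < q ^+ t by rewrite exprn_gt0.
rewrite -(@ler_pM2r _ (q^-1 ^+ t)) ?exprn_gt0 ?invr_gt0 //.
rewrite exprVn mulfK ?gt_eqF //.
apply: le_trans (_ : q ^- t <= _).
  rewrite -exprVn; apply: le_trans decay.
  by rewrite -!natrM ler_nat; nia.
by apply: ler_peMl; rewrite ?invr_ge0 ?exprn_ge0 ?ler1n // ltW.
Qed.

Lemma decay_le_of_small (R : realFieldType) (q : R) m t :
  0 <= q <= 8^-1 -> (0 < t)%N -> 2 * (m + 2 * t)%:R * q ^+ t <= m.+1%:R.
Proof.
case/andP=> q_ge0 q_le t_gt0.
have qt_le : q ^+ t <= q by rewrite ler_iXnr //; lra.
have tqt_le : t%:R * q ^+ t <= 2 * q.
  apply: le_trans (_ : (2 * q) ^+ t <= _); last by rewrite ler_iXnr ?mulr_ge0 //; lra.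
  by rewrite exprMn ler_wpM2r ?exprn_ge0 // -natrX ler_nat ltnW // ltn_expl.
have mqt_le : m%:R * q ^+ t <= m%:R * 8^-1 by rewrite ler_wpM2l //; lra.
rewrite natrD natrM -addn1 natrD.
have -> : 2 * (m%:R + 2%:R * t%:R) * q ^+ t = 2 * (m%:R * q ^+ t) + 4 * (t%:R * q ^+ t)
  by ring.
have m_ge0 : (0 : R) <= m%:R by [].
lra.
Qed.

Definition lhs_term (R : numDomainType) (q : R) n l mu :=
  ('C(n, l + mu) * 'C(l + mu, l))%:R * q ^+ (l * mu).

Definition lhs_majorant (R : numFieldType) (a : R) n m l mu :=
  ('C(n, m) * 'C(n - m, l + (mu - m)))%:R * a ^+ (l + (mu - m)) * 2^-1 ^+ (mu - m).

Lemma lhs_majorant_ge0 (R : numFieldType) (a : R) n m l mu :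
  0 <= a -> 0 <= lhs_majorant a n m l mu.
Proof. by move=> a_ge0; rewrite !mulr_ge0 ?exprn_ge0 ?invr_ge0. Qed.

Lemma lhs_term_le_majorant (R : realFieldType) (q : R) m n l mu :
  0 <= q -> (m <= mu <= l)%N -> (l + mu <= n)%N ->
  ((m < mu)%N -> 2 * (m + 2 * (l - m))%:R * q ^+ (l - m) <= m.+1%:R) ->
  lhs_term q n l mu <= lhs_majorant (q ^+ m) n m l mu.
Proof.
move=> q_ge0 /andP[le_m_mu le_mu_l] le_lmu_n decay.
rewrite /lhs_term /lhs_majorant.
set j := (mu - m)%N; set t := (l - m)%N; set k := (l + j)%N.
have mu_eq : mu = (m + j)%N by rewrite /j; lia.
have exp_eq : (l * mu = m * k + t * j)%N by rewrite /k /t /j; nia.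
have key : 'C(k, j)%:R * (q ^+ t) ^+ j <= 'C(mu, m)%:R * 2^-1 ^+ j :> R.
  have [lt_m_mu|le_mu_m] := ltnP m mu; last first.
    have -> : j = 0%N by rewrite /j; lia.
    by rewrite bin0 !expr0 !mulr1 ler1n bin_gt0.
  have -> : 'C(mu, m) = 'C(m + j, j).
    by rewrite mu_eq -[in RHS](bin_sub (leq_addl m j)) addnK.
  apply: bin_mul_pow_le; first exact: exprn_ge0.
  apply: le_trans (decay lt_m_mu); rewrite -/t ler_wpM2r ?exprn_ge0 //.
  by rewrite ler_pM2l // ler_nat /k /t /j; lia.
rewrite exp_eq exprD !exprM.
rewrite -(@ler_pM2r _ 'C(mu, m)%:R) ?ltr0n ?bin_gt0 //.
have -> : ('C(n, l + mu) * 'C(l + mu, l))%:R * ((q ^+ m) ^+ k * (q ^+ t) ^+ j)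
            * 'C(mu, m)%:R
          = ('C(n, m) * 'C(n - m, k))%:R * (q ^+ m) ^+ k * ('C(k, j)%:R * (q ^+ t) ^+ j).
  by rewrite -mulrA mulrCA -natrM mul_bin_bin_bin // natrM; ring.
rewrite -!mulrA ler_wpM2l // ler_wpM2l ?exprn_ge0 //.
by rewrite [leRHS]mulrC.
Qed.

Lemma sum_lhs_majorant_le (R : realFieldType) (a : R) m n : 0 <= a ->
  \sum_(l < n.+1) \sum_(mu < n.+1 | (m <= mu)%N) lhs_majorant a n m l mu
    <= 2 * 'C(n, m)%:R * (1 + a) ^+ (n - m).
Proof.
move=> a_ge0; rewrite exchange_big /=.
pose Y := 'C(n, m)%:R * (1 + a) ^+ (n - m).
have Y_ge0 : 0 <= Y by rewrite mulr_ge0 ?exprn_ge0 ?addr_ge0.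
apply: le_trans (_ : \sum_(mu < n.+1 | (m <= mu)%N) Y * 2^-1 ^+ (mu - m) <= _).
  apply: ler_sum => mu _.
  have -> : \sum_(l < n.+1) lhs_majorant a n m l mu =
      'C(n, m)%:R * (\sum_(l < n.+1) 'C(n - m, l + (mu - m))%:R * a ^+ (l + (mu - m)))
        * 2^-1 ^+ (mu - m).
    by rewrite mulr_sumr mulr_suml; apply: eq_bigr => l _; rewrite /lhs_majorant natrM !mulrA.
  rewrite ler_wpM2r ?exprn_ge0 ?invr_ge0 // ler_wpM2l //.
  exact: sum_bin_shift_le.
have -> : \sum_(mu < n.+1 | (m <= mu)%N) Y * 2^-1 ^+ (mu - m)
          = Y * \sum_(m <= mu < n.+1) 2^-1 ^+ (mu - m).
  by rewrite big_geq_mkord mulr_sumr.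
have -> : 2 * 'C(n, m)%:R * (1 + a) ^+ (n - m) = Y * 2 by rewrite /Y; ring.
by rewrite ler_wpM2l // sum_halfpow_le2.
Qed.

Lemma lhs_sum_le (R : realType) (p e : R) m n :
  0 <= p / (1 - p) -> 0 <= e ->
  (forall l mu : nat, (m <= mu <= l)%N -> (l + mu <= n)%N ->
     lhs_term (p / (1 - p)) n l mu <= lhs_majorant ((p / (1 - p)) ^+ m) n m l mu + e) ->
  lhs_sum p m n
    <= 2 * 'C(n, m)%:R * (1 + (p / (1 - p)) ^+ m) ^+ (n - m) + (n.+1 ^ 2)%:R * e.
Proof.
rewrite /lhs_sum; set q := p / (1 - p) => q_ge0 e_ge0 term_le.
have maj_ge0 l mu : 0 <= lhs_majorant (q ^+ m) n m l mu.
  by rewrite lhs_majorant_ge0 ?exprn_ge0.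
apply: le_trans (_ : \sum_(l < n.+1) \sum_(mu < n.+1 | (m <= mu)%N)
                       lhs_majorant (q ^+ m) n m l mu
                     + \sum_(l < n.+1) \sum_(mu < n.+1) e <= _); last first.
  apply: lerD; first by rewrite sum_lhs_majorant_le ?exprn_ge0.
  by rewrite !sumr_const !card_ord -mulrnA mulnn mulr_natl.
rewrite -big_split; apply: ler_sum => l _ /=.
apply: le_trans (_ : \sum_(mu < n.+1 | (m <= mu <= l)%N && (l + mu <= n)%N)
                       (lhs_majorant (q ^+ m) n m l mu + e) <= _).
  by apply: ler_sum => mu /andP[]; exact: term_le.
rewrite big_split /=; apply: lerD; apply: ler_sum_subpred => // mu.
by case/andP=> /andP[].
Qed.

Lemma majorant_bound_le_rhs (R : realFieldType) (a e : R) m n :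
  0 <= a -> (0 < m <= n)%N -> e <= a * (1 + a) ^+ (n - m) ->
  2 * 'C(n, m)%:R * (1 + a) ^+ (n - m) + e <= 2 * 'C(n, m)%:R * (1 + a) ^+ n.
Proof.
move=> a_ge0 /andP[m_gt0 le_mn] e_le.
set C : R := 'C(n, m)%:R; set Y := (1 + a) ^+ (n - m).
have C_ge1 : 1 <= C by rewrite ler1n bin_gt0.
have Y_ge0 : 0 <= Y by rewrite exprn_ge0 ?addr_ge0.
have -> : (1 + a) ^+ n = Y * (1 + a) ^+ m by rewrite -exprD subnK.
apply: le_trans (_ : 2 * C * (Y * (1 + a)) <= _); last first.
  rewrite ler_wpM2l ?mulr_ge0 // ?(le_trans ler01 C_ge1) // ler_wpM2l //.
  by rewrite -{1}[1 + a]expr1 ler_weXn2l ?lerDl.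
rewrite mulrDr mulr1 mulrDr lerD2l; apply: le_trans e_le _.
by rewrite [a * Y]mulrC ler_peMl ?mulr_ge0 //; lra.
Qed.

Lemma lhs_term_le_pow (R : realFieldType) (q : R) n L l mu :
  0 <= q <= 1 -> (mu <= l < L)%N -> lhs_term q n l mu <= ((2 * n.+1) ^ (2 * L))%:R.
Proof.
case/andP=> q_ge0 q_le1 /andP[le_mu_l lt_lL].
apply: le_trans (_ : ('C(n, l + mu) * 'C(l + mu, l))%:R * 1 <= _).
  by rewrite ler_wpM2l // exprn_ile1.
have le_2L : (l + mu <= 2 * L)%N by lia.
rewrite mulr1 ler_nat expnMn mulnC; apply: leq_mul.
  by apply: leq_trans (bin_leq_exp2 _ _) _; exact: leq_pexp2l.
apply: leq_trans (leq_bin2l _ (leqnSn n)) _.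
by apply: leq_trans (bin_leq_expn _ _) _; exact: leq_pexp2l.
Qed.

Lemma odds_gt0_lt1 (R : realFieldType) (p : R) :
  0 < p -> p < 2^-1 -> 0 < p / (1 - p) < 1.
Proof.
move=> p_gt0 p_lt; have one_p_gt0 : 0 < 1 - p by lra.
by rewrite divr_gt0 // ltr_pdivrMr // mul1r; lra.
Qed.

Lemma odds_le_eighth (R : realFieldType) (p : R) :
  0 < p -> p < 100^-1 -> p / (1 - p) <= 8^-1.
Proof.
move=> p_gt0 p_lt; have one_p_gt0 : 0 < 1 - p by lra.
by rewrite ler_pdivrMr //; lra.
Qed.

Lemma lhs_sum_le_rhs_small (R : realType) (m : nat) (p : R) :
  (0 < m)%N -> 0 < p -> p < 100^-1 ->
  forall n : nat, (m <= n)%N -> lhs_sum p m n <= rhs_bound p m n.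
Proof.
move=> m_gt0 p_gt0 p_lt n le_mn.
have q_ge0 : 0 <= p / (1 - p) by rewrite divr_ge0 //; lra.
have q_le := odds_le_eighth p_gt0 p_lt.
apply: le_trans (lhs_sum_le q_ge0 (lexx 0) _) _.
  move=> l mu le_m_mu_l le_lmu_n; rewrite addr0.
  apply: lhs_term_le_majorant => // lt_m_mu.
  by apply: decay_le_of_small; [rewrite q_ge0 q_le | lia].
apply: majorant_bound_le_rhs; [exact: exprn_ge0 | by rewrite m_gt0 le_mn |].
by rewrite mulr0 mulr_ge0 ?exprn_ge0 // addr_ge0 // exprn_ge0.
Qed.

Lemma lhs_sum_le_rhs_eventually (R : realType) (m : nat) (p : R) :
  (0 < m)%N -> 0 < p -> p < 2^-1 ->
  exists M : nat, forall n : nat, (M < n)%N -> lhs_sum p m n <= rhs_bound p m n.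
Proof.
move=> m_gt0 p_gt0 p_lt; have q_bounds := odds_gt0_lt1 p_gt0 p_lt.
have /andP[q_gt0 q_lt1] := q_bounds.
set q := p / (1 - p) in q_bounds q_gt0 q_lt1; have q_ge0 := ltW q_gt0.
have [T decay] := exists_decay_le m q_bounds.
pose L := (m + T)%N.
have [M poly_le] :=
  exp_dominates_poly_shift (2 * L + 2) m (exprn_gt0 m q_gt0) (ler0n _ (2 ^ (2 * L))).
exists (maxn M m) => n; rewrite gtn_max => /andP[lt_Mn lt_mn].
apply: le_trans (lhs_sum_le q_ge0 (ler0n _ ((2 * n.+1) ^ (2 * L))) _) _.
  move=> l mu /andP[le_m_mu le_mu_l] le_lmu_n.
  have [lt_lL|le_Ll] := ltnP l L.
    have q01 : 0 <= q <= 1 by rewrite q_ge0 ltW.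
    apply: le_trans (lhs_term_le_pow n q01 (_ : (mu <= l < L)%N)) _; first by rewrite le_mu_l.
    by rewrite lerDr lhs_majorant_ge0 ?exprn_ge0.
  apply: le_trans (lhs_term_le_majorant q_ge0 (_ : (m <= mu <= l)%N) le_lmu_n _) _.
  - by rewrite le_m_mu.
  - by move=> _; apply: decay; lia.
  - by rewrite lerDl.
apply: majorant_bound_le_rhs; [exact: exprn_ge0 | by rewrite m_gt0 ltnW |].
rewrite -natrM (_ : n.+1 ^ 2 * (2 * n.+1) ^ (2 * L) = 2 ^ (2 * L) * n.+1 ^ (2 * L + 2))%N.
  by rewrite natrM poly_le.
by rewrite expnMn expnD mulnCA [(n.+1 ^ 2 * _)%N]mulnC.
Qed.

Theorem mainTheorem5 (R : realType) :
  (forall (m : nat) (p : R), (2 <= m)%N -> 0 < p -> p < 2^-1 ->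
     exists M : nat, forall n : nat, (M < n)%N -> lhs_sum p m n <= rhs_bound p m n)
  /\
  (forall (m : nat) (p : R), (2 <= m)%N -> 0 < p -> p < 100^-1 ->
     forall n : nat, (2 * m <= n)%N -> lhs_sum p m n <= rhs_bound p m n).
Proof.
split=> m p m_ge2 p_gt0 p_lt; have m_gt0 : (0 < m)%N by apply: ltnW.
  exact: lhs_sum_le_rhs_eventually.
by move=> n le_2m_n; apply: lhs_sum_le_rhs_small => //; lia.
Qed.
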